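(* Let $\epsilon>0$ and let $E\subset[0,3/2-\epsilon]$ be a measurable set with Lebesgue measure $m(E)=1$, and suppose $E$ tiles $\mathbb{R}$ with respect to $\mathbb{Z}$. Then $\widehat{\chi_E}(\xi)\neq 0$ for all $\xi$ with $-1/2\leq\xi\leq 1/2$.
   Context: $E$ tiles $\mathbb{R}$ with respect to $\mathbb{Z}$ means $\sum_{k\in\mathbb{Z}}\chi_E(x-k)=1$ for almost every $x\in\mathbb{R}$, where $\chi_E$ is the indicator function of $E$. The Fourier transform is $\widehat{\chi_E}(\xi)=\int_E e^{-2\pi i x\xi}\,dx$. *)

From HB Require Import structures.
From mathcomp Require Import all_boot all_order all_algebra.
From mathcomp Require Import all_classical all_reals all_analysis.
From mathcomp Require Import complex.
Set Implicit Arguments. Unset Strict Implicit. Unset Printing Implicit Defensive.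
Import Order.TTheory GRing.Theory Num.Theory.
Import numFieldNormedType.Exports.
Local Open Scope classical_set_scope.
Local Open Scope ring_scope.

Definition tiles_by_Z (R : realType) (E : set R) : Prop :=
  {ae (@lebesgue_measure R), forall x : R,
     (\esum_(k in [set: int]) ((\1_E (x - k%:~R) : R)%:E) = 1)%E}.

(* Fourier transform of chi_E:  int_E e^{-2 pi i x xi} dx
   = int_E cos(2 pi x xi) dx - i int_E sin(2 pi x xi) dx  (value in R[i]). *)
Definition fourier_indic (R : realType) (E : set R) (xi : R) : R[i] :=
  Complex (Rintegral (@lebesgue_measure R) E (fun x => cos (2 * pi * x * xi)))
    (- Rintegral (@lebesgue_measure R) E (fun x => sin (2 * pi * x * xi))).

From HB Require Import structures.
From mathcomp Require Import all_boot all_order all_algebra.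
From mathcomp Require Import all_classical all_reals all_analysis.
From mathcomp Require Import complex.
From mathcomp Require Import measurable_realfun lra zify.
Import Order.TTheory GRing.Theory Num.Theory.
Import numFieldNormedType.Exports.
Local Open Scope classical_set_scope.
Local Open Scope ring_scope.

(** Put a = 2 pi xi and c = max (1/2) (1 - eps), so that |a| <= pi, 0 < c < 1
   and E lies in [0, c + 1/2].  The real part of e^(i a c) fourier_indic E xi
   is the integral over E of g x = cos (a (x - c)).  Since E tiles R by Z,
   almost every x in [0, 1[ lies in E or in E - 1, and in the second case
   x <= c - 1/2, so |x + 1 - c| <= |x - c| <= 1 and, cos decreasing on
   [0, pi], g x <= g (x + 1).  Translating those points back into E gives
   int_[0,1[ g <= int_E g, while int_[0,1] g = (sin (a (1 - c)) + sin (a c)) / a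
   is positive. *)

Section lebesgue_facts.
Context {R : realType}.
Local Notation mu := (@lebesgue_measure R).

Lemma lebesgue_measure_shift (a : R) (A : set R) : measurable A ->
  pushforward mu (fun x => x + a : measurableTypeR R) A = mu A.
Proof.
move=> mA; apply/esym/lebesgue_measure_unique => //=.
  by apply: measurable_funD => //; exact: measurable_cst.
move=> _ _ [[x y]] _ <-; rewrite /pushforward.
have -> : (fun x => x + a) @^-1` `]x, y] = `](x - a), (y - a)]%classic.
  by apply/seteqP; split => z /=; rewrite !in_itv/= ?ltrBlDr ?lerBrDr.
rewrite /= !lebesgue_measure_itv/= !lte_fin ltrD2r.
by case: ifP => // _; rewrite -EFinD; congr (_%:E); lra.
Qed.

Lemma ge0_integral_shift (a : R) (D : set R) (f : R -> \bar R) :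
  measurable D -> measurable_fun D f -> (forall x, D x -> (0 <= f x)%E) ->
  (\int[mu]_(x in D) f x = \int[mu]_(x in (fun x => x + a)%R @^-1` D) f (x + a)%R)%E.
Proof.
move=> mD mf f0.
have mshift : measurable_fun [set: measurableTypeR R] (fun x => x + a : measurableTypeR R).
  by apply: measurable_funD => //; exact: measurable_cst.
rewrite -[RHS](ge0_integral_pushforward mshift _ mD mf); last first.
  by move=> y; rewrite inE; exact: f0.
by apply: eq_measure_integral => //= A mA _; rewrite lebesgue_measure_shift.
Qed.

Lemma continuous_bounded_integrable {D : set R} {f : R -> R} {M : R} :
  measurable D -> (mu D < +oo)%E -> continuous f -> (forall x, `|f x| <= M) ->
  mu.-integrable D (EFin \o f).
Proof.
move=> mD Dfin cf fM; apply: measurable_bounded_integrable => //.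
  exact: measurable_funS (continuous_measurable_fun cf).
exists M; split=> [|M' MM' x _]; first exact: num_real.
exact: le_trans (fM x) (ltW MM').
Qed.
End lebesgue_facts.

Section tiling.
Context {R : realType}.
Local Notation mu := (@lebesgue_measure R).
Variable E : set R.
Hypotheses (mE : measurable E) (E02 : E `<=` `[0, 2[) (tileE : tiles_by_Z E).

Lemma tiles_by_Z_unit_cover :
  {ae mu, forall x, `[0, 1[%classic x -> E x \/ E (x + 1)}.
Proof.
case: tileE => M [mM M0 tileM]; exists M; split => // x /= ncover.
apply: tileM => /= sum1; apply: ncover => Ix.
have [Ex|nEx] := pselect (E x); first by left.
have [Ex1|nEx1] := pselect (E (x + 1)); first by right.
move: sum1; rewrite esum1 => [/eqP|k _]; first by rewrite eq_sym onee_eq0.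
rewrite indicE; have [Exk|nExk] := pselect (E (x - k%:~R)); last by rewrite memNset.
have := E02 _ Exk; move: Ix; rewrite /= !in_itv /= => /andP[x0 x1] /andP[xk0 xk2].
have k2 : (-2 < k)%R by rewrite -(ltr_int R); lra.
have k1 : (k < 1)%R by rewrite -(ltr_int R); lra.
exfalso; have [k0|kN1] : k = 0 \/ k = -1 by lia.
- by apply: nEx; move: Exk; rewrite k0 mulr0z subr0.
- by apply: nEx1; move: Exk; rewrite kN1 mulrN1z opprK.
Qed.

Lemma ge0_integral_unit_le_tile (h : R -> \bar R) :
  measurable_fun setT h -> (forall x, 0 <= h x)%E ->
  (forall x, `[0, 1[%classic x -> E (x + 1) -> (h x <= h (x + 1)%R)%E) ->
  (\int[mu]_(x in `[0%R, 1%R[) h x <= \int[mu]_(x in E) h x)%E.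
Proof.
move=> mh h0 hshift.
set I := `[0, 1[%classic : set R.
have mI : measurable I by exact: measurable_itv.
have mshift : measurable_fun [set: measurableTypeR R] (fun x => x + 1 : measurableTypeR R).
  by apply: measurable_funD => //; exact: measurable_cst.
have mpre (D : set R) : measurable D -> measurable ((fun x => x + 1) @^-1` D).
  by move=> mD; have := mshift measurableT _ mD; rewrite setTI.
have mhD (D : set R) : measurable_fun D h by exact: measurable_funS mh.
have mhsD (D : set R) : measurable_fun D (fun x => h (x + 1)%R).
  by apply: measurable_funS (measurableT_comp mh mshift).
set A := E `&` I; set F := E `\` I.
set B := (I `\` E) `&` (fun x => x + 1) @^-1` E.
(* Up to a null set, I is covered by A and B, and B + 1 lies in F. *)
have mA : measurable A by exact: measurableI.
have mF : measurable F by exact: measurableD.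
have mB : measurable B by apply: measurableI; [exact: measurableD | exact: mpre].
have h0D (D : set R) : forall x, D x -> (0 <= h x)%E by move=> x _; exact: h0.
have IAB : (\int[mu]_(x in I) h x <= \int[mu]_(x in A) h x + \int[mu]_(x in B) h x)%E.
  have [M [mM M0 coverM]] := tiles_by_Z_unit_cover.
  have AB : [disjoint A & B].
    by apply/disj_set2P/seteqP; split => // x [[Ex _] [[_ nEx] _]]; exact: nEx.
  apply: (@le_trans _ _ (\int[mu]_(x in A `|` B) h x)%E); last first.
    by rewrite (ge0_integral_setU mu mA mB (mhD _) (h0D _) AB).
  rewrite (ge0_negligible_integral mM) //; last exact: mhD.
  apply: ge0_subset_integral => //; [exact: measurableD | exact: measurableU | exact: mhD |].
  move=> x [Ix nMx]; have [Ex|nEx] := pselect (E x); first by left.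
  right; split => //; have [//|nEx1] := pselect (E (x + 1)).
  by exfalso; apply: nMx; apply: coverM => /= /(_ Ix) [].
have BF : (\int[mu]_(x in B) h x <= \int[mu]_(x in F) h x)%E.
  rewrite (ge0_integral_shift 1 F h mF (mhD _) (h0D _)).
  apply: (le_trans (ge0_le_integral mu mB (h0D _) (mhD _) (mhsD _) _)).
    by move=> x [[Ix _] Ex1]; exact: hshift.
  apply: ge0_subset_integral => //; [exact: mpre | exact: mhsD |].
  move=> x [[Ix _] Ex1]; split => //=; move: Ix; rewrite /I /= !in_itv /=; lra.
have -> : (\int[mu]_(x in E) h x = \int[mu]_(x in A) h x + \int[mu]_(x in F) h x)%E.
  have AF : [disjoint A & F].
    by apply/disj_set2P/seteqP; split => // x [[_ Ix] [_ nIx]]; exact: nIx.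
  by rewrite -(ge0_integral_setU mu mA mF (mhD _) (h0D _) AF) setUIDK.
by apply: le_trans IAB _; rewrite leeD2l.
Qed.

Lemma Rintegral_unit_le_tile (g : R -> R) (M : R) :
  mu E = 1%E -> continuous g -> (forall x, `|g x| <= M) ->
  (forall x, `[0, 1[%classic x -> E (x + 1) -> g x <= g (x + 1)) ->
  \int[mu]_(x in `[0, 1[) g x <= \int[mu]_(x in E) g x.
Proof.
move=> muE cg gM gshift.
have shifted_integral (D : set R) : measurable D -> mu D = 1%E ->
    (\int[mu]_(x in D) (g x + M)%:E = (\int[mu]_(x in D) g x + M)%:E)%E.
  move=> mD D1; have Dfin : (mu D < +oo)%E by rewrite D1 ltry.
  have ig := continuous_bounded_integrable mD Dfin cg gM.
  have iM := continuous_bounded_integrable mD Dfin (@cst_continuous R R M) (fun=> lexx `|M|).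
  rewrite integralD_EFin // integral_cst //= D1 mule1 EFinD fineK //.
  exact: integrable_fin_num.
have mI : measurable (`[0, 1[%classic : set R) by exact: measurable_itv.
have muI : mu `[0%R, 1%R[%classic = 1%E.
  by rewrite lebesgue_measure_itv /= lte_fin ltr01 -EFinD subr0.
rewrite -(lerD2r M) -lee_fin -shifted_integral // -shifted_integral //.
apply: ge0_integral_unit_le_tile => [|x|x Ix Ex1].
- apply/measurable_EFinP; apply: measurable_funD; last exact: measurable_cst.
  exact: continuous_measurable_fun.
- by rewrite lee_fin; have := gM x; rewrite ler_norml; lra.
- by rewrite lee_fin lerD2r gshift.
Qed.
End tiling.

Section trigonometry.
Context {R : realType}.
Local Notation mu := (@lebesgue_measure R).
Implicit Types a c u v x y : R.

Lemma continuous_cos_affine a c : continuous (fun x => cos (a * (x - c))).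
Proof.
move=> x; apply: continuous_comp; last exact: continuous_cos.
apply: continuous_comp; last exact: mulrl_continuous.
by apply: continuousB; [exact: id | exact: cst_continuous].
Qed.

Lemma is_derive_sin_affine a c x :
  is_derive x 1 (fun y => sin (a * (y - c))) (cos (a * (x - c)) * a).
Proof.
have dlin y : is_derive y 1 (fun z => a * (z - c)) a.
  suff : is_derive y 1 (fun z => a * (z - c)) (a *: (1 - 0)) by rewrite subr0 scaler1.
  by apply: is_deriveZ; exact: is_deriveB.
have dsin : derivable (fun y => sin (a * (y - c))) x 1.
  apply/derivable1_diffP.
  apply: (@differentiable_comp _ _ _ _ (fun z => a * (z - c)) sin).
    by apply/derivable1_diffP; exact: (@ex_derive _ _ _ _ _ _ _ (dlin x)).
  by apply/derivable1_diffP; exact: ex_derive.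
apply: (is_derive_eq (derivableP dsin)).
rewrite -derive1E (derive1_comp (f := fun z => a * (z - c)) (g := sin)).
- by rewrite !derive1E !derive_val.
- exact: (@ex_derive _ _ _ _ _ _ _ (dlin x)).
- exact: ex_derive.
Qed.

Lemma cos_le_shift1 a y : `|a| <= pi -> -1 <= y -> y <= - (1 / 2) ->
  cos (a * y) <= cos (a * (y + 1)).
Proof.
move=> api y1 y2; rewrite -(cos_norm (a * y)) -(cos_norm (a * (y + 1))) !normrM.
rewrite (ler0_norm (_ : y <= 0)) ?(ger0_norm (_ : 0 <= y + 1)); [|lra|lra].
have a0 := normr_ge0 a.
rewrite leNgt ltr_cos ?in_itv /= -?leNgt.
- by rewrite ler_wpM2l //; lra.
- rewrite mulr_ge0 //=; last lra.
  by apply: le_trans api; rewrite ler_piMr //; lra.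
- rewrite mulr_ge0 //=; last lra.
  by apply: le_trans api; rewrite ler_piMr //; lra.
Qed.

Lemma integral_cos_affine a c u v : u < v ->
  (\int[mu]_(x in `[u, v]) (cos (a * (x - c)) * a)%:E =
    (sin (a * (v - c)) - sin (a * (u - c)))%:E)%E.
Proof.
move=> uv; have dF x := is_derive_sin_affine a c x.
have cF : continuous (fun y => sin (a * (y - c))).
  by move=> x; exact/differentiable_continuous/derivable1_diffP/(@ex_derive _ _ _ _ _ _ _ (dF x)).
rewrite (@continuous_FTC2 _ _ (fun y => sin (a * (y - c)))) // ?EFinB //.
  apply/continuous_subspaceT => x; apply: continuousM; last exact: cst_continuous.
  exact: continuous_cos_affine.
split.
- by move=> x _; exact: (@ex_derive _ _ _ _ _ _ _ (dF x)).
- by apply: cvg_at_right_filter; exact: cF.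
- by apply: cvg_at_left_filter; exact: cF.
- by move=> x _; rewrite derive1E (@derive_val _ _ _ _ _ _ _ (dF x)).
Qed.

Lemma sin_affine_mul_gt0 a c : a != 0 -> `|a| <= pi -> 0 < c -> c < 1 ->
  0 < (sin (a * (1 - c)) + sin (a * c)) * a.
Proof.
have pos b : 0 < b -> b <= pi -> 0 < c -> c < 1 -> 0 < sin (b * (1 - c)) + sin (b * c).
  move=> b0 bpi c0 c1; apply: addr_gt0; apply: sin_gt0_pi; apply/andP; split.
  - by apply: mulr_gt0 => //; lra.
  - by apply: lt_le_trans bpi; rewrite gtr_pMr //; lra.
  - exact: mulr_gt0.
  - by apply: lt_le_trans bpi; rewrite gtr_pMr //; lra.
move=> a0 api c0 c1; have [aneg|apos] := ltP a 0.
  rewrite ltr0_norm // in api.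
  have := pos (- a); rewrite !mulNr !sinN -opprD oppr_gt0.
  by move=> /(_ aneg api c0 c1); rewrite oppr_gt0 => neg; rewrite nmulr_lgt0.
rewrite ger0_norm // in api.
by rewrite pmulr_lgt0 ?pos // lt0r a0.
Qed.

Lemma Rintegral_cos_affine_gt0 a c : `|a| <= pi -> 0 < c -> c < 1 ->
  0 < \int[mu]_(x in `[0, 1[) cos (a * (x - c)).
Proof.
move=> api c0 c1.
have ig (b : bool) : mu.-integrable [set` Interval (BLeft 0) (BSide b 1)]
    (EFin \o fun x => cos (a * (x - c))).
  apply: continuous_bounded_integrable (continuous_cos_affine a c) (fun=> cos_max _) => //.
  by rewrite lebesgue_measure_itv /=; case: ifP => _; rewrite ltry.
rewrite Rintegral_itv_bndo_bndc //.
have [->|a0] := eqVneq a 0.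
  under eq_Rintegral do rewrite mul0r cos0.
  by rewrite Rintegral_cst //= lebesgue_measure_itv /= lte_fin ltr01 /= subr0 mul1r.
rewrite -(pmulr_lgt0 _ (_ : 0 < a * a)); last by rewrite lt0r mulf_neq0 //= -expr2 sqr_ge0.
rewrite mulrA -RintegralZr //.
have /(congr1 fine) := integral_cos_affine a c 0 1 ltr01.
rewrite /= -/(Rintegral _ _ _) => ->.
by rewrite sub0r mulrN sinN opprK sin_affine_mul_gt0.
Qed.
End trigonometry.

Section fourier.
Context {R : realType}.
Local Notation mu := (@lebesgue_measure R).

Lemma Rintegral_cos_fourier_indic (E : set R) (xi c : R) :
  measurable E -> (mu E < +oo)%E ->
  \int[mu]_(x in E) cos (2 * pi * xi * (x - c)) =
    complex.Re (fourier_indic E xi) * cos (2 * pi * xi * c)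
    - complex.Im (fourier_indic E xi) * sin (2 * pi * xi * c).
Proof.
move=> mE Efin.
have cfreq (f : R -> R) : continuous f -> continuous (fun x => f (2 * pi * x * xi)).
  move=> cf x; apply: continuous_comp; last exact: cf.
  apply: continuousM; last exact: cst_continuous.
  by apply: continuousM; [exact: cst_continuous | exact: id].
have ig (f : R -> R) (k : R) : continuous f -> (forall x, `|f x| <= 1) ->
    mu.-integrable E (EFin \o fun x => f (2 * pi * x * xi) * k).
  move=> cf f1; apply: (continuous_bounded_integrable mE Efin (M := `|k|)).
    by move=> x; apply: continuousM; [exact: cfreq | exact: cst_continuous].
  by move=> x; rewrite normrM ler_piMl.
have ig1 (f : R -> R) : continuous f -> (forall x, `|f x| <= 1) ->
    mu.-integrable E (EFin \o fun x => f (2 * pi * x * xi)).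
  by move=> cf f1; exact: continuous_bounded_integrable mE Efin (cfreq f cf) (fun=> f1 _).
under eq_Rintegral do rewrite mulrBr cosB (mulrAC _ xi).
rewrite RintegralD //; last 2 first.
- by apply: (ig cos); [exact: continuous_cos | exact: cos_max].
- by apply: (ig sin); [exact: continuous_sin | exact: sin_max].
rewrite !(RintegralZr (mu := mu)) //; last 2 first.
- by apply: (ig1 sin); [exact: continuous_sin | exact: sin_max].
- by apply: (ig1 cos); [exact: continuous_cos | exact: cos_max].
by rewrite /fourier_indic /= mulNr opprK.
Qed.
End fourier.

Theorem lemma3p2 (R : realType) (eps : R) (E : set R) :
  0 < eps ->
  measurable E ->
  E `<=` `[0, 3 / 2 - eps] ->
  (@lebesgue_measure R E = 1%E) ->
  tiles_by_Z E ->
  forall xi : R, - (1 / 2) <= xi <= 1 / 2 -> fourier_indic E xi != 0.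
Proof.
move=> eps0 mE Esub muE tileE xi /andP[xi1 xi2].
set a := 2 * pi * xi; set c := Num.max (1 / 2) (1 - eps).
have api : `|a| <= pi.
  have pi0 : 0 < pi :> R := pi_gt0 R.
  have xi12 : `|xi| <= 1 / 2 by rewrite ler_norml xi1 xi2.
  rewrite /a normrM ger0_norm; [nra | rewrite mulr_ge0 // ltW //].
have c0 : 0 < c by rewrite lt_max; apply/orP; left.
have c1 : c < 1 by rewrite gt_max; apply/andP; split; lra.
have cE : forall x, E x -> x <= c + 1 / 2.
  move=> x /Esub; rewrite /= in_itv /= => /andP[_ x2].
  apply: le_trans x2 _; have : 1 - eps <= c by rewrite le_max lexx orbT.
  lra.
have E02 : E `<=` `[0, 2[.
  by move=> x /Esub; rewrite /= !in_itv /= => /andP[-> ?] /=; lra.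
have Eshift x : `[0, 1[%classic x -> E (x + 1) -> cos (a * (x - c)) <= cos (a * (x + 1 - c)).
  move=> Ix /cE x1; move: Ix; rewrite /= in_itv /= => /andP[x0 _].
  by rewrite addrAC; apply: cos_le_shift1 => //; lra.
have := Rintegral_unit_le_tile E mE E02 tileE _ _ muE (continuous_cos_affine a c)
  (fun=> cos_max _) Eshift.
move=> /(lt_le_trans (Rintegral_cos_affine_gt0 _ _ api c0 c1)).
rewrite Rintegral_cos_fourier_indic ?muE ?ltry //.
by apply: contraTneq => ->; rewrite /= !mul0r subr0 ltxx.
Qed.
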